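(* Let $f:\mathbb{R}_+\to\mathbb{R}_+$ and $g:\mathbb{R}^2\to\mathbb{R}_+$ be non-negative, $g$ symmetric, and $\kappa(t,x,y)=1\wedge f(t)g(x,y)$. Let $W^{(1)},W^{(2)}$ be i.i.d. copies of a real random variable $W$. Assume (1) there are $\alpha_p>1$ and $t_1\ge0$ with $f(t)\le t^{-\alpha_p}$ for all $t>t_1$, and (2) there are $\beta_p>0$ and $t_2\ge0$ with $\mathbb{P}(g(W^{(1)},W^{(2)})>t)\le t^{-\beta_p}$ for all $t>t_2$. Then for every $\epsilon>0$ there is $t_0=t_0(\epsilon)>0$ such that for all $t>t_0$, $$\mathbb{E}\big[\kappa(t,W^{(1)},W^{(2)})\big]\le t^{-\min\{\alpha_p,\alpha_p\beta_p\}+\epsilon}.$$ *)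

From HB Require Import structures.
From mathcomp Require Import all_boot all_order all_algebra.
From mathcomp Require Import all_classical all_reals all_analysis.
Set Implicit Arguments. Unset Strict Implicit. Unset Printing Implicit Defensive.
Import Order.TTheory GRing.Theory Num.Theory.
Local Open Scope classical_set_scope.
Local Open Scope ring_scope.

Definition kappa {R : realType} (f : R -> R) (g : R -> R -> R) (t x y : R) : R :=
  Num.min 1 (f t * g x y).

Definition independent2 {d} {T : measurableType d} {R : realType}
  (P : probability T R) (X Y : T -> R) : Prop :=
  forall A B : set R, measurable A -> measurable B ->
    P (X @^-1` A `&` Y @^-1` B) = (P (X @^-1` A) * P (Y @^-1` B))%E.

Definition identically_distributed {d} {T : measurableType d} {R : realType}
  (P : probability T R) (X Y : T -> R) : Prop :=
  forall A : set R, measurable A -> P (X @^-1` A) = P (Y @^-1` A).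

From HB Require Import structures.
From mathcomp Require Import all_boot all_order all_algebra.
From mathcomp Require Import all_classical all_reals all_analysis.
From mathcomp Require Import measurable_realfun lra.
Set Implicit Arguments. Unset Strict Implicit. Unset Printing Implicit Defensive.
Import Order.TTheory GRing.Theory Num.Theory.
Local Open Scope classical_set_scope.
Local Open Scope ring_scope.

(* Put G := g(W1, W2) and cut its range at the levels s_k := t^(k alpha/n), k <= n.
   On {s_k < G <= s_(k+1)} the kernel is at most t^-alpha s_(k+1), on {G <= s_0 = 1} at
   most t^-alpha, and above s_n = t^alpha the bound 1 = t^-alpha s_n suffices, so
   E kappa <= t^-alpha + sum_(k<n) t^-alpha s_(k+1) P(G > s_k).  By the tail assumption
   (by P <= 1 when k = 0) the k-th term is at most t^(alpha/n + u (1 - beta) - alpha)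
   with u = k alpha/n in [0, alpha]; this exponent is affine in u, hence maximal at
   u = 0 or u = alpha, so each of the n + 1 terms is at most
   t^(alpha/n - min(alpha, alpha beta)).  Choosing alpha/n <= eps/2 and t so large that
   n + 1 <= t^(eps/2) concludes. *)

Lemma affine_le_oppr_min (R : realDomainType) (alpha beta u : R) :
  0 <= u <= alpha -> u - alpha - u * beta <= - Num.min alpha (alpha * beta).
Proof.
move=> /andP[u_ge0 u_le]; rewrite lerNr ge_min; apply/orP.
have [beta_le1|beta_gt1] := lerP beta 1.
  right; have : 0 <= (alpha - u) * (1 - beta) by rewrite mulr_ge0 // subr_ge0.
  nra.
left; have : 0 <= u * (beta - 1) by rewrite mulr_ge0 // subr_ge0 ltW.
nra.
Qed.

Lemma ltr_powR_of_root (R : realType) (a p t : R) :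
  0 <= a -> 0 < p -> a `^ p^-1 < t -> a < t `^ p.
Proof.
move=> a_ge0 p_gt0 root_lt.
have t_ge0 : 0 <= t by exact: le_trans (powR_ge0 _ _) (ltW root_lt).
rewrite -[a in a < _](powRr1 a_ge0) -(mulVf (lt0r_neq0 p_gt0)) powRrM.
by apply: gt0_ltr_powR; rewrite ?nnegrE ?powR_ge0.
Qed.

Lemma measurable_superlevel d (T : measurableType d) (R : realType) (G : T -> R) (s : R) :
  measurable_fun setT G -> measurable [set w | (s < G w)%R].
Proof.
move=> mG; have := mG measurableT _ (measurable_itv `]s, +oo[).
by rewrite setTI /preimage /=; under eq_set do rewrite in_itv /= andbT.
Qed.

Lemma indic_superlevel T (R : realDomainType) (G : T -> R) (s : R) (w : T) :
  \1_[set w | (s < G w)%R] w = ((s < G w)%R)%:R :> R.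
Proof.
by rewrite indicE; case: ltP => h; [rewrite mem_set | rewrite memNset //= ltNge h].
Qed.

Lemma minr1_le_layers_tail (R : realDomainType) (c x : R) (s : nat -> R) (n : nat) :
  0 <= c -> (forall k, 0 <= s k) ->
  Num.min 1 (c * x) <=
    c * s 0%N + \sum_(k < n) c * s k.+1 * ((s k < x)%R)%:R + ((s n < x)%R)%:R.
Proof.
move=> c_ge0 s_ge0.
have min_le1 : Num.min 1 (c * x) <= 1 by rewrite ge_min lexx.
have min_le_cx : Num.min 1 (c * x) <= c * x by rewrite ge_min lexx orbT.
have cs_ge0 k : 0 <= c * s k by rewrite mulr_ge0.
have sum_ge0 m : 0 <= \sum_(k < m) c * s k.+1 * ((s k < x)%R)%:R.
  by apply: sumr_ge0 => k _; rewrite mulr_ge0.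
elim: n => [|n IHn].
  rewrite big_ord0 addr0; have := cs_ge0 0%N; case: ltP => [_|x_le] /=; first lra.
  have : c * x <= c * s 0%N by rewrite ler_wpM2l.
  lra.
have := sum_ge0 n; rewrite big_ord_recr /=.
set S := \sum_(i < n) _ in IHn *; move=> S_ge0.
have [x_le|sn_lt] := leP x (s n).
  move: IHn; rewrite ltNge x_le /= mulr0 => IHn.
  by have := cs_ge0 n.+1; case: (_ < _) => /=; lra.
have := cs_ge0 0%N; have := cs_ge0 n.+1; case: leP => [x_le|_] /=; last lra.
have : c * x <= c * s n.+1 by rewrite ler_wpM2l.
lra.
Qed.

Lemma minr1_le_layers (R : realDomainType) (c x : R) (s : nat -> R) (n : nat) :
  0 <= c -> (forall k, 0 <= s k) -> 1 <= c * s n ->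
  Num.min 1 (c * x) <= c * s 0%N + \sum_(k < n) c * s k.+1 * ((s k < x)%R)%:R.
Proof.
move=> c_ge0 s_ge0; case: n => [|n] top_ge1.
  by rewrite big_ord0 addr0 (le_trans _ top_ge1) // ge_min lexx.
apply: le_trans (minr1_le_layers_tail x n c_ge0 s_ge0) _.
rewrite big_ord_recr /= addrA lerD2l.
by case: (_ < _); rewrite /= ?mulr1 ?mulr0.
Qed.

Lemma expectation_le_indic_sum d (T : measurableType d) (R : realType)
    (P : probability T R) (h : T -> R) (a : R) (n : nat) (c : nat -> R)
    (E : nat -> set T) :
  measurable_fun setT h -> (forall w, 0 <= h w) ->
  0 <= a -> (forall k, 0 <= c k) -> (forall k, measurable (E k)) ->
  (forall w, h w <= a + \sum_(k < n) c k * \1_(E k) w) ->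
  ('E_P[h] <= a%:E + \sum_(k < n) (c k)%:E * P (E k))%E.
Proof.
move=> mh h_ge0 a_ge0 c_ge0 mE h_le.
have mcE k : measurable_fun setT (fun w => (c k)%:E * (\1_(E k) w)%:E)%E.
  by apply/measurable_EFinP/measurable_funM => //; exact: measurable_indic.
have cE_ge0 k w : (0 <= (c k)%:E * (\1_(E k) w)%:E)%E.
  by rewrite mule_ge0 ?lee_fin.
rewrite unlock; apply: (@le_trans _ _
  (\int[P]_w (a%:E + \sum_(k < n) (c k)%:E * (\1_(E k) w)%:E))%E).
  apply: ge0_le_integral => //.
  - by move=> w _; rewrite lee_fin.
  - exact/measurable_EFinP.
  - by apply: emeasurable_funD => //; exact: emeasurable_sum.
  - move=> w _; under eq_bigr => k _ do rewrite -EFinM.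
    by rewrite sumEFin -EFinD lee_fin.
rewrite ge0_integralD //; last 2 first.
- by move=> w _; rewrite sume_ge0.
- exact: emeasurable_sum.
rewrite integral_cst // -[_ [set: T]]/(P [set: T]) probability_setT mule1.
rewrite ge0_integral_sum //.
apply: leeD => //; apply: lee_sum => k _.
have := expectation_indic P (mE k); rewrite unlock => <-.
by rewrite ge0_integralZl_EFin //; exact/measurable_EFinP/measurable_indic.
Qed.

Section layered_tail_bound.
Context d (T : measurableType d) (R : realType) (P : probability T R).
Variables (G : T -> R) (alpha beta t2 t : R) (n : nat).
Hypotheses (mG : measurable_fun setT G) (alpha_ge0 : 0 <= alpha)
  (G_tail : forall s, t2 < s ->
     (P [set w | (s < G w)%R] <= (s `^ (- beta))%:E)%E)
  (t_ge1 : 1 <= t) (n_gt0 : (0 < n)%N) (tail_below : t2 < t `^ (alpha / n%:R)).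

Let delta := alpha / n%:R.
Let m := Num.min alpha (alpha * beta).
Let level k := t `^ (k%:R * delta).

Let delta_ge0 : 0 <= delta.
Proof. by rewrite divr_ge0. Qed.

Let n_delta : n%:R * delta = alpha.
Proof. by rewrite /delta mulrC divfK // pnatr_eq0 -lt0n. Qed.

Let powRD_t x y : t `^ (x + y) = t `^ x * t `^ y.
Proof.
have t_neq0 : t != 0 by rewrite gt_eqF // (lt_le_trans ltr01).
by rewrite powRD // t_neq0 implybT.
Qed.

Let ler_powR_t x y : x <= y -> t `^ x <= t `^ y.
Proof. exact: ler_powR. Qed.

Lemma layer_term_le k : (k < n)%N ->
  ((t `^ (- alpha) * level k.+1)%:E * P [set w | (level k < G w)%R]
    <= (t `^ (delta - m))%:E)%E.
Proof.
move=> k_lt_n.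
have m_le_alpha : m <= alpha by rewrite ge_min lexx.
have weight_ge0 : (0 <= (t `^ (- alpha) * level k.+1)%:E)%E.
  by rewrite lee_fin mulr_ge0 ?powR_ge0.
have weightE : t `^ (- alpha) * level k.+1 = t `^ (k%:R * delta - alpha + delta).
  by rewrite -powRD_t /level -addn1 natrD mulrDl mul1r addrCA addrA.
case: k k_lt_n weight_ge0 weightE => [|k] k_lt_n weight_ge0 weightE.
  apply: le_trans (lee_wpmul2l weight_ge0 (probability_le1 P (measurable_superlevel _ mG))) _.
  by rewrite mule1 lee_fin weightE mul0r add0r ler_powR_t //; lra.
have level_above : t2 < level k.+1.
  apply: (lt_le_trans tail_below); rewrite /level ler_powR_t //.
  by rewrite ler_peMl // ler1n.
apply: le_trans (lee_wpmul2l weight_ge0 (G_tail level_above)) _.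
rewrite /level -powRrM weightE -EFinM -powRD_t lee_fin ler_powR_t //.
have u_range : 0 <= k.+1%:R * delta <= alpha.
  by rewrite mulr_ge0 //= -n_delta ler_wpM2r // ler_nat ltnW.
have := affine_le_oppr_min beta u_range.
rewrite /m; lra.
Qed.

Lemma expectation_le_layered (h : T -> R) :
  measurable_fun setT h -> (forall w, 0 <= h w) ->
  (forall w, h w <= Num.min 1 (t `^ (- alpha) * G w)) ->
  ('E_P[h] <= (n.+1%:R * t `^ (delta - m))%:E)%E.
Proof.
move=> mh h_ge0 h_le.
have m_le_alpha : m <= alpha by rewrite ge_min lexx.
have level_ge0 k : 0 <= level k by exact: powR_ge0.
have scale_ge0 : 0 <= t `^ (- alpha) by exact: powR_ge0.
have top_ge1 : 1 <= t `^ (- alpha) * level n.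
  by rewrite /level n_delta -powRD_t addNr powRr0.
have h_layers w : h w <= t `^ (- alpha) * level 0%N +
    \sum_(k < n) t `^ (- alpha) * level k.+1 * \1_[set w | (level k < G w)%R] w.
  under eq_bigr do rewrite indic_superlevel.
  exact: le_trans (h_le w) (minr1_le_layers _ scale_ge0 level_ge0 top_ge1).
apply: le_trans (expectation_le_indic_sum P (c := fun k => t `^ (- alpha) * level k.+1)
  (E := fun k => [set w | (level k < G w)%R]) mh h_ge0 _ _ _ h_layers) _.
- by rewrite mulr_ge0.
- by move=> k; rewrite mulr_ge0.
- by move=> k; exact: measurable_superlevel.
rewrite mulr_natl mulrS EFinD; apply: leeD.
  by rewrite /level mul0r powRr0 mulr1 lee_fin ler_powR_t //; have := delta_ge0; lra.
apply: le_trans (lee_sum _ (fun k _ => layer_term_le (ltn_ord k))) _.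
by rewrite sumEFin sumr_const card_ord.
Qed.

End layered_tail_bound.

Lemma expectation_min1_eventually_le d (T : measurableType d) (R : realType)
    (P : probability T R) (G : T -> R) (h : R -> T -> R) (alpha beta t1 t2 : R) :
  measurable_fun setT G -> 0 < alpha -> 0 <= t2 ->
  (forall s, t2 < s -> (P [set w | (s < G w)%R] <= (s `^ (- beta))%:E)%E) ->
  (forall t, measurable_fun setT (h t)) ->
  (forall t w, t1 < t -> 0 <= h t w) ->
  (forall t w, t1 < t -> h t w <= Num.min 1 (t `^ (- alpha) * G w)) ->
  forall eps, 0 < eps -> exists t0, 0 < t0 /\ forall t, t0 < t ->
    ('E_P[h t] <= (t `^ (- Num.min alpha (alpha * beta) + eps))%:E)%E.
Proof.
move=> mG alpha_gt0 t2_ge0 G_tail mh h_ge0 h_le eps eps_gt0.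
set m := Num.min alpha (alpha * beta).
pose n := (Num.truncn (2 * alpha / eps)).+1.
pose delta := alpha / n%:R.
have delta_gt0 : 0 < delta by rewrite divr_gt0 ?ltr0n.
have delta_le : delta <= eps / 2.
  have : 2 * alpha / eps < n%:R := truncnS_gt _.
  rewrite ltr_pdivrMr // => n_big.
  by rewrite /delta ler_pdivrMr ?ltr0n //; lra.
pose t0 := Num.max (Num.max 1 t1)
  (Num.max ((t2 + 1) `^ delta^-1) (n.+1%:R `^ (eps / 2)^-1)).
exists t0; split; first by rewrite (lt_le_trans ltr01) // !le_max lexx.
move=> t; rewrite !gt_max => /andP[/andP[t_gt1 t_gt_t1] /andP[t_big_tail t_big_n]].
have tail_below : t2 < t `^ delta.
  apply: lt_trans (ltr_powR_of_root _ delta_gt0 t_big_tail); first by rewrite ltrDl.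
  by rewrite addr_ge0.
have n_small : n.+1%:R < t `^ (eps / 2).
  by rewrite (ltr_powR_of_root _ _ t_big_n) // divr_gt0.
apply: le_trans (expectation_le_layered mG (ltW alpha_gt0) G_tail (ltW t_gt1)
  (ltn0Sn _) tail_below (mh t) (h_ge0 t ^~ t_gt_t1) (h_le t ^~ t_gt_t1)) _.
have t_neq0 : t != 0 by rewrite gt_eqF // (lt_trans ltr01).
rewrite lee_fin (_ : - m + eps = eps / 2 + (eps / 2 - m)); last lra.
rewrite -/delta -/m [leRHS]powRD ?t_neq0 ?implybT //.
by rewrite ler_pM ?ler0n ?powR_ge0 ?(ltW n_small) // ler_powR ?(ltW t_gt1) // lerD2r.
Qed.

Theorem lemma2p3 (R : realType) (d : measure_display) (T : measurableType d)
  (P : probability T R) (f : R -> R) (g : R -> R -> R) (W1 W2 : T -> R)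
  (f_ge0 : forall t, 0 <= t -> 0 <= f t)
  (g_ge0 : forall x y, 0 <= g x y)
  (g_sym : forall x y, g x y = g y x)
  (g_meas : measurable_fun [set: R * R] (fun p : R * R => g p.1 p.2))
  (W1_meas : measurable_fun [set: T] W1)
  (W2_meas : measurable_fun [set: T] W2)
  (W_indep : independent2 P W1 W2)
  (W_id : identically_distributed P W1 W2)
  (alpha_p beta_p t1 t2 : R)
  (alpha_gt1 : 1 < alpha_p) (t1_ge0 : 0 <= t1)
  (hf : forall t, t1 < t -> f t <= t `^ (- alpha_p))
  (beta_gt0 : 0 < beta_p) (t2_ge0 : 0 <= t2)
  (hg : forall t, t2 < t ->
     (P [set w | (t < g (W1 w) (W2 w))%R] <= (t `^ (- beta_p))%:E)%E) :
  forall eps : R, 0 < eps -> exists t0 : R, 0 < t0 /\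
    forall t, t0 < t ->
      ('E_P[fun w => kappa f g t (W1 w) (W2 w)]
        <= (t `^ (- Num.min alpha_p (alpha_p * beta_p) + eps))%:E)%E.
Proof.
have mG : measurable_fun setT (fun w => g (W1 w) (W2 w)).
  exact: measurableT_comp g_meas (measurable_fun_pair W1_meas W2_meas).
have t_ge0 t : t1 < t -> 0 <= t by move=> /ltW; exact: le_trans t1_ge0.
apply: (expectation_min1_eventually_le mG).
- exact: lt_trans ltr01 alpha_gt1.
- exact: t2_ge0.
- exact: hg.
- by move=> t; apply: measurable_minr => //; apply: measurable_funM.
- by move=> t w /t_ge0 ?; rewrite /kappa le_min ler01 mulr_ge0 // f_ge0.
- by move=> t w ?; rewrite /kappa le_min ge_min lexx /= ge_min orbC ler_wpM2r // hf.
Qed.
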